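(* Let $V$ be a finite nonempty set, $c\in\mathbb{R}^{P_V}$, $\hat x$ a maximally specific partial function on $P_V$, $U\subseteq V$, $\hat x'=\hat x|_{P_U}$, $c'=c|_{P_U}$, $ij\in P_U\setminus\operatorname{dom}(\hat x)$, $b\in\{0,1\}$ and $y\in\operatorname{argmax}\{\varphi_{c'}(x')\mid x'\in X_U[\hat x'],\ x'_{ij}=b\}$. Let $\tau\in\{\tau^y_{\mathrm{out}},\tau^y_{\mathrm{in}},\tau^y_{\mathrm{bd}}\}$ with corresponding sets $P''_{01},P''_{10}$ given in the context. Then for every $x\in X_V[\hat x]$: $$\sum_{pq\in\delta(U)}c_{pq}\big(x_{pq}-\tau(x)_{pq}\big)\le\sum_{pq\in P''_{01}}c^-_{pq}+\sum_{pq\in P''_{10}}c^+_{pq}.$$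
   Context: For a finite set $W$, $P_W=\{pq\in W^2\mid p\neq q\}$, $X_W$ is the set of $x\in\{0,1\}^{P_W}$ with $x_{pq}+x_{qr}-x_{pr}\le1$ for all pairwise distinct $p,q,r\in W$, and $\varphi_c(x)=\sum_{pq\in P_W}c_{pq}x_{pq}$. A partial function $\tilde x$ on $P_W$ is a map from $\operatorname{dom}(\tilde x)\subseteq P_W$ to $\{0,1\}$, $\tilde x^{-1}(b)$ the pairs mapped to $b$, $X_W[\tilde x]=\{x\in X_W\mid x_{pq}=\tilde x_{pq}\ \forall pq\in\operatorname{dom}(\tilde x)\}$; convention $x_{aa}=1$, $y_{aa}=1$ for all $a$. A pair is decided if it has the same value in all completions; $\tilde x$ is maximally specific if $X_W[\tilde x]\ne\emptyset$ and the decided pairs are exactly $\operatorname{dom}(\tilde x)$. Restrictions to $P_U$ are the obvious ones. $\delta(U)=(U\times(V\setminus U))\cup((V\setminus U)\times U)$. For $x\in X_V[\hat x]$: $\tau^y_{\mathrm{out}}(x)_{pq}$ equals $y_{pq}$ on $P_U$; $0$ on $U\times(V\setminus U)$; on $(V\setminus U)\times U$, $1$ if $\exists r\in U: x_{pr}=1\wedge y_{rq}=1$ and $0$ otherwise; $x_{pq}$ on $P_{V\setminus U}$. $\tau^y_{\mathrm{in}}(x)_{pq}$ equals $y_{pq}$ on $P_U$; $0$ on $(V\setminus U)\times U$; on $U\times(V\setminus U)$, $1$ if $\exists r\in U: y_{pr}=1\wedge x_{rq}=1$ and $0$ otherwise; $x_{pq}$ on $P_{V\setminus U}$. $\tau^y_{\mathrm{bd}}(x)_{pq}$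 equals $y_{pq}$ on $P_U$; $0$ on $\delta(U)$; $x_{pq}$ on $P_{V\setminus U}$. Sets: for $\tau^y_{\mathrm{out}}$: $P''_{01}=((V\setminus U)\times U)\setminus\hat x^{-1}(1)$, $P''_{10}=(U\times(V\setminus U))\setminus\hat x^{-1}(0)$; for $\tau^y_{\mathrm{in}}$: $P''_{01}=(U\times(V\setminus U))\setminus\hat x^{-1}(1)$, $P''_{10}=((V\setminus U)\times U)\setminus\hat x^{-1}(0)$; for $\tau^y_{\mathrm{bd}}$: $P''_{01}=\emptyset$, $P''_{10}=\delta(U)\setminus\hat x^{-1}(0)$. For real $a$: $a^+=\max(a,0)$, $a^-=\max(-a,0)$. *)

From HB Require Import structures.
From mathcomp Require Import all_boot all_order all_algebra.
From mathcomp Require Import reals.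
Set Implicit Arguments. Unset Strict Implicit. Unset Printing Implicit Defensive.
Import Order.TTheory GRing.Theory Num.Theory.
Local Open Scope ring_scope.

Section Defs.
Variable V : finType.

Definition Pairs (W : {set V}) : {set V * V} :=
  [set pq | [&& pq.1 \in W, pq.2 \in W & pq.1 != pq.2]].

(* x in {0,1}^{P_W}: encoded as a boolean function on V*V vanishing outside P_W *)
Definition inX (W : {set V}) (x : V * V -> bool) : Prop :=
  (forall pq, pq \notin Pairs W -> x pq = false) /\
  (forall p q r, p \in W -> q \in W -> r \in W ->
     p != q -> q != r -> p != r ->
     ((x (p, q))%:R + (x (q, r))%:R - (x (p, r))%:R <= 1 :> int)).

(* a partial function on P_W: None = undefined; dom contained in P_W *)
Definition partial_fun (W : {set V}) (xt : V * V -> option bool) : Prop :=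
  forall pq, xt pq <> None -> pq \in Pairs W.

Definition dom (xt : V * V -> option bool) : {set V * V} :=
  [set pq | xt pq != None].

Definition inXp (W : {set V}) (xt : V * V -> option bool) (x : V * V -> bool) :=
  inX W x /\ forall pq b, xt pq = Some b -> x pq = b.

Definition decided (W : {set V}) (xt : V * V -> option bool) (pq : V * V) :=
  forall x1 x2, inXp W xt x1 -> inXp W xt x2 -> x1 pq = x2 pq.

Definition maximally_specific (W : {set V}) (xt : V * V -> option bool) :=
  partial_fun W xt /\ (exists x, inXp W xt x) /\
  (forall pq, pq \in Pairs W -> (decided W xt pq <-> pq \in dom xt)).

Definition restrP (U : {set V}) (xt : V * V -> option bool) : V * V -> option bool :=
  fun pq => if pq \in Pairs U then xt pq else None.

(* phi_c(x) over P_W; phi_{c|P_U} = phi over P_U with c *)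
Definition phi (R : realType) (W : {set V}) (c : V * V -> R) (x : V * V -> bool) : R :=
  \sum_(pq in Pairs W) c pq * (x pq)%:R.

(* convention x_aa = 1 *)
Definition val1 (x : V * V -> bool) (p q : V) : bool := (p == q) || x (p, q).

Definition delta (U : {set V}) : {set V * V} :=
  [set pq | ((pq.1 \in U) && (pq.2 \notin U)) || ((pq.1 \notin U) && (pq.2 \in U))].

Inductive tau_kind := tau_out | tau_in | tau_bd.

Definition tau (k : tau_kind) (U : {set V}) (y x : V * V -> bool) (pq : V * V) : bool :=
  let p := pq.1 in let q := pq.2 in
  if p == q then false (* outside P_V *)
  else if (p \in U) && (q \in U) then y pq
  else if (p \in U) && (q \notin U) then
    match k with
    | tau_out => false
    | tau_in => [exists r in U, val1 y p r && val1 x r q]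
    | tau_bd => false
    end
  else if (p \notin U) && (q \in U) then
    match k with
    | tau_out => [exists r in U, val1 x p r && val1 y r q]
    | tau_in => false
    | tau_bd => false
    end
  else x pq.

Definition P01 (k : tau_kind) (U : {set V}) (xh : V * V -> option bool) : {set V * V} :=
  match k with
  | tau_out => [set pq | [&& pq.1 \notin U, pq.2 \in U & xh pq != Some true]]
  | tau_in => [set pq | [&& pq.1 \in U, pq.2 \notin U & xh pq != Some true]]
  | tau_bd => set0
  end.

Definition P10 (k : tau_kind) (U : {set V}) (xh : V * V -> option bool) : {set V * V} :=
  match k with
  | tau_out => [set pq | [&& pq.1 \in U, pq.2 \notin U & xh pq != Some false]]
  | tau_in => [set pq | [&& pq.1 \notin U, pq.2 \in U & xh pq != Some false]]
  | tau_bd => [set pq | (pq \in delta U) && (xh pq != Some false)]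
  end.

Definition is_argmax (R : realType) (U : {set V}) (c : V * V -> R)
    (xh' : V * V -> option bool) (ij : V * V) (b : bool) (y : V * V -> bool) : Prop :=
  inXp U xh' y /\ y ij = b /\
  forall x', inXp U xh' x' -> x' ij = b -> phi U c x' <= phi U c y.

End Defs.

Definition posp (R : realType) (a : R) : R := Num.max a 0.
Definition negp (R : realType) (a : R) : R := Num.max (- a) 0.

(** The bound holds pair by pair and uses only that [x] agrees with [xh].  On a pair of
    [delta U] where [x] is 0 and [tau x] is 1 the term is [-c <= c^-], and the
    pair is in [P''_01] since [xh] is not 1 there.  Where [x] is 1 and [tau x]
    is 0 the term is [c <= c^+]; [tau x] cannot be the existential over [U]
    there ([x] itself is a witness), so the pair is in [P''_10]. *)
From Pilot Require Import Defs.
From mathcomp Require Import all_boot all_order all_algebra.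
From mathcomp Require Import reals.
Import Order.TTheory GRing.Theory Num.Theory.
Local Open Scope ring_scope.

Section PosNegParts.
Variable R : realType.

Lemma posp_ge0 (a : R) : 0 <= posp a.
Proof. by rewrite /posp le_max lexx orbT. Qed.

Lemma negp_ge0 (a : R) : 0 <= negp a.
Proof. by rewrite /negp le_max lexx orbT. Qed.

Lemma le_posp (a : R) : a <= posp a.
Proof. by rewrite /posp le_max lexx. Qed.

Lemma oppr_le_negp (a : R) : - a <= negp a.
Proof. by rewrite /negp le_max lexx. Qed.

Lemma mulr_bool_subr_le (a : R) (u v P Q : bool) :
  (~~ u && v ==> P) -> (u && ~~ v ==> Q) ->
  a * (u%:R - v%:R) <= (if P then negp a else 0) + (if Q then posp a else 0).
Proof.
have [n0 p0] := (negp_ge0 a, posp_ge0 a).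
case: u v P Q => [] [] [] [] //= _ _;
  rewrite ?subrr ?subr0 ?sub0r ?mulr0 ?mulr1 ?mulrN1 ?addr0 ?add0r ?addr_ge0 //.
- by rewrite ler_wpDl ?le_posp.
- by rewrite le_posp.
- by rewrite ler_wpDr ?oppr_le_negp.
- by rewrite oppr_le_negp.
Qed.

Lemma sum_le_sums_subset (I : finType) (D A B : {set I}) (f g h : I -> R) :
  A \subset D -> B \subset D ->
  (forall i, i \in D ->
     f i <= (if i \in A then g i else 0) + (if i \in B then h i else 0)) ->
  \sum_(i in D) f i <= \sum_(i in A) g i + \sum_(i in B) h i.
Proof.
move=> /subsetP sAD /subsetP sBD le_f.
have sum_in_D (C : {set I}) (F : I -> R) : {subset C <= D} ->
    \sum_(i in C) F i = \sum_(i in D) (if i \in C then F i else 0).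
  move=> sCD; rewrite -big_mkcondr; apply: eq_bigl => i /=.
  by apply/idP/andP => [iC | [] //]; split; rewrite ?sCD.
by rewrite (sum_in_D A) // (sum_in_D B) // -big_split ler_sum.
Qed.

End PosNegParts.

Section TauOnCut.
Variables (V : finType) (U : {set V}) (xh : V * V -> option bool).
Variables (x y : V * V -> bool).
Hypothesis x_agrees : forall pq b, xh pq = Some b -> x pq = b.

Lemma xh_neq_negx pq : xh pq != Some (~~ x pq).
Proof. by apply/eqP => /x_agrees; case: (x pq). Qed.

Lemma exists_val1_via_source (p q : V) : p \in U -> x (p, q) ->
  [exists r in U, Defs.val1 y p r && Defs.val1 x r q].
Proof.
by move=> pU xpq; apply/existsP; exists p; rewrite pU /Defs.val1 eqxx xpq orbT.
Qed.

Lemma exists_val1_via_target (p q : V) : q \in U -> x (p, q) ->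
  [exists r in U, Defs.val1 x p r && Defs.val1 y r q].
Proof.
by move=> qU xpq; apply/existsP; exists q; rewrite qU /Defs.val1 eqxx xpq orbT.
Qed.

Lemma tau_U_notU k p q : p \in U -> q \notin U ->
  tau k U y x (p, q) =
    if k is tau_in then [exists r in U, Defs.val1 y p r && Defs.val1 x r q]
    else false.
Proof.
move=> pU qU; have pq : (p == q) = false by apply: contraNF qU => /eqP <-.
by rewrite /tau /= pq pU (negbTE qU) /=; case: k.
Qed.

Lemma tau_notU_U k p q : p \notin U -> q \in U ->
  tau k U y x (p, q) =
    if k is tau_out then [exists r in U, Defs.val1 x p r && Defs.val1 y r q]
    else false.
Proof.
move=> pU qU; have pq : (p == q) = false by apply: contraNF pU => /eqP ->.
by rewrite /tau /= pq qU (negbTE pU) /=; case: k.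
Qed.

Lemma P01_sub_delta k : P01 k U xh \subset delta U.
Proof.
by apply/subsetP; case: k => -[p q]; rewrite !inE //= => /and3P[-> -> _];
  rewrite ?orbT.
Qed.

Lemma P10_sub_delta k : P10 k U xh \subset delta U.
Proof.
apply/subsetP; case: k => -[p q]; rewrite !inE //=; last by case/andP.
all: by case/and3P=> -> -> _; rewrite ?orbT.
Qed.

Lemma tau_gain_in_P01 k pq : pq \in delta U ->
  ~~ x pq && tau k U y x pq ==> (pq \in P01 k U xh).
Proof.
case: pq => p q; rewrite inE /= => /orP[] /andP[pU qU];
  [rewrite tau_U_notU | rewrite tau_notU_U] => //.
all: case: k; rewrite ?andbF //= inE pU qU; apply/implyP => /andP[/negbTE x0 _].
all: by have := xh_neq_negx (p, q); rewrite x0.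
Qed.

Lemma tau_loss_in_P10 k pq : pq \in delta U ->
  x pq && ~~ tau k U y x pq ==> (pq \in P10 k U xh).
Proof.
case: pq => p q dpq; apply/implyP => /andP[x1 tau0].
have xh_ne : xh (p, q) != Some false by have := xh_neq_negx (p, q); rewrite x1.
move: dpq tau0; rewrite inE /= => /orP[] /andP[pU qU];
  [rewrite tau_U_notU | rewrite tau_notU_U] => //.
all: by case: k; rewrite !inE ?exists_val1_via_source ?exists_val1_via_target
  ?pU ?qU ?xh_ne ?orbT.
Qed.

End TauOnCut.

Theorem corollary7p5 (R : realType) (V : finType) (c : V * V -> R)
    (xh : V * V -> option bool) (U : {set V}) (i j : V) (b : bool)
    (y : V * V -> bool) (k : tau_kind) :
  (0 < #|V|)%N ->
  maximally_specific [set: V] xh ->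
  (i, j) \in Pairs U -> (i, j) \notin dom xh ->
  is_argmax U c (restrP U xh) (i, j) b y ->
  forall x : V * V -> bool, inXp [set: V] xh x ->
    \sum_(pq in delta U) c pq * ((x pq)%:R - (tau k U y x pq)%:R)
    <= \sum_(pq in P01 k U xh) negp (c pq) + \sum_(pq in P10 k U xh) posp (c pq).
Proof.
move=> _ _ _ _ _ x [_ x_agrees].
apply: sum_le_sums_subset; rewrite ?P01_sub_delta ?P10_sub_delta // => pq dpq.
by apply: mulr_bool_subr_le; [apply: tau_gain_in_P01 | apply: tau_loss_in_P10].
Qed.
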